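(* Assume $h_0x+h_1y>0$ for all $(x,y)\in D$. Let $(x^*,y^* )\in\partial D$ be a minimizer of $\psi$ over $D$ lying on the boundary; such a minimizer exists. Let $A,B\subset[0,1]$ be Borel sets with Lebesgue measures $$|A|=\frac{\mu_+-x^*}{\mu_+-\mu_-},\qquad |B|=\frac{\sigma_+-y^*}{\sigma_+-\sigma_-}.$$ Define $(\mu^*,\sigma^* ):[0,1]\to D$ by - $(\mu^*,\sigma^* )=(\mu_-,\ \sigma_-\chi_B+\sigma_+\chi_{B^c})$ if $x^*=\mu_-$; - $(\mu^*,\sigma^* )=(\mu_+,\ \sigma_-\chi_B+\sigma_+\chi_{B^c})$ if $x^*=\mu_+$; - $(\mu^*,\sigma^* )=(\mu_-\chi_A+\mu_+\chi_{A^c},\ \sigma_-)$ if $y^*=\sigma_-$; - $(\mu^*,\sigma^* )=(\mu_-\chi_A+\mu_+\chi_{A^c},\ \sigma_+)$ if $y^*=\sigma_+$. (At a corner, any applicable case may be used.) Then $(\mu^*,\sigma^* )$ minimizes $$\frac{\Big(\int_0^1\big(h_0\mu(\omega)+h_1\sigma(\omega)\big)d\omega\Big)^2}{\int_0^1\big(\mu^2(\omega)+\sigma^2(\omega)\big)d\omega}$$ over all measurable $(\mu(\cdot),\sigma(\cdot)):[0,1]\to D$.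
   Context: Let $0<\mu_-<\mu_+$ and $0<\sigma_-<\sigma_+$ be real numbers, $D=[\mu_-,\mu_+]\times[\sigma_-,\sigma_+]$, and $h_0,h_1\in\mathbb R$. Write $\mu_M=(\mu_++\mu_-)/2$ and $\sigma_M=(\sigma_++\sigma_-)/2$. For $(x,y)\in D$ let $$\psi(x,y)=\frac{(h_0x+h_1y)^2}{2\mu_Mx+2\sigma_My-\mu_-\mu_+-\sigma_-\sigma_+}.$$ $\chi_A$ denotes the indicator function of $A$, and $A^c=[0,1]\setminus A$. *)

From HB Require Import structures.
From mathcomp Require Import all_boot all_order all_algebra.
From mathcomp Require Import all_classical all_reals all_analysis.
Set Implicit Arguments. Unset Strict Implicit. Unset Printing Implicit Defensive.
Import Order.TTheory GRing.Theory Num.Theory.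
Local Open Scope classical_set_scope.
Local Open Scope ring_scope.

Section Defs.
Variable R : realType.
Variables (mum mup sgm sgp h0 h1 : R).

Definition inD (x y : R) : Prop := mum <= x <= mup /\ sgm <= y <= sgp.

Definition onBoundaryD (x y : R) : Prop :=
  inD x y /\ (x = mum \/ x = mup \/ y = sgm \/ y = sgp).

Definition muM : R := (mup + mum) / 2.
Definition sgM : R := (sgp + sgm) / 2.

Definition psi (x y : R) : R :=
  (h0 * x + h1 * y) ^+ 2 /
  (2 * muM * x + 2 * sgM * y - mum * mup - sgm * sgp).

Definition psi_minimizer (xs ys : R) : Prop :=
  inD xs ys /\ forall x y, inD x y -> psi xs ys <= psi x y.

Definition J (mu sg : R -> R) : R :=
  (Rintegral (@lebesgue_measure R) (`[0, 1]%classic : set R) (fun w => h0 * mu w + h1 * sg w)) ^+ 2 /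
  Rintegral (@lebesgue_measure R) (`[0, 1]%classic : set R) (fun w => mu w ^+ 2 + sg w ^+ 2).

Definition admissible (mu sg : R -> R) : Prop :=
  measurable_fun (`[0, 1]%classic : set R) mu /\ measurable_fun (`[0, 1]%classic : set R) sg /\
  (forall w, w \in (`[0, 1]%classic : set R) -> inD (mu w) (sg w)).

Local Notation I01 := (`[0, 1]%classic : set R).
Definition star_pair (xs ys : R) (A B : set R) (mus sgs : R -> R) : Prop :=
  let Ac := I01 `\` A in
  let Bc := I01 `\` B in
     (xs = mum /\ forall w, w \in I01 ->
        mus w = mum /\ sgs w = sgm * \1_B w + sgp * \1_Bc w)
  \/ (xs = mup /\ forall w, w \in I01 ->
        mus w = mup /\ sgs w = sgm * \1_B w + sgp * \1_Bc w)
  \/ (ys = sgm /\ forall w, w \in I01 ->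
        mus w = mum * \1_A w + mup * \1_Ac w /\ sgs w = sgm)
  \/ (ys = sgp /\ forall w, w \in I01 ->
        mus w = mum * \1_A w + mup * \1_Ac w /\ sgs w = sgp).
End Defs.

From HB Require Import structures.
From mathcomp Require Import all_boot all_order all_algebra.
From mathcomp Require Import all_classical all_reals all_analysis.
From mathcomp Require Import ring lra.
Set Implicit Arguments. Unset Strict Implicit. Unset Printing Implicit Defensive.
Import Order.TTheory GRing.Theory Num.Theory numFieldNormedType.Exports.
Local Open Scope classical_set_scope.
Local Open Scope ring_scope.

(* Pointwise, mu^2 <= (mu_+ + mu_-) mu - mu_- mu_+ on [mu_-, mu_+], with equality
   exactly at the endpoints, and likewise for sigma.  Integrating over [0, 1]
   bounds the denominator of J(mu, sigma) by the denominator of psi at the means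
   (int mu, int sigma), so J(mu, sigma) >= psi(int mu, int sigma) >= psi xs ys,
   while the controls of the theorem take only endpoint values and, by the choice
   of |A| and |B|, have means xs and ys, so that for them J equals psi xs ys.
   A minimizer of psi exists on the compact rectangle D; pushing it along a
   direction that keeps h0 x + h1 y fixed and does not decrease the affine
   denominator of psi until it leaves D yields a minimizer on the boundary. *)

Lemma sqr_le_secant (R : realFieldType) (lo hi x : R) :
  lo <= x <= hi -> x ^+ 2 <= (hi + lo) * x - lo * hi.
Proof. by move=> /andP[lx xh]; nra. Qed.

Lemma sqr_secant_endpoint (R : comRingType) (lo hi x : R) :
  x = lo \/ x = hi -> x ^+ 2 = (hi + lo) * x - lo * hi.
Proof. by case=> ->; ring. Qed.

Lemma ray_exits_interval (R : realFieldType) (lo hi x a : R) :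
  lo <= x <= hi -> a != 0 ->
  exists2 T, 0 <= T & (x + T * a = lo \/ x + T * a = hi) /\
    forall t, 0 <= t <= T -> lo <= x + t * a <= hi.
Proof.
move=> /andP[lx xh] a_neq0; have [a_gt0|a_le0] := ltP 0 a.
  exists ((hi - x) / a); first by apply: divr_ge0; lra.
  have hiE : (hi - x) / a * a = hi - x by field; rewrite gt_eqF.
  split; first by right; lra.
  move=> t /andP[t_ge0 tT].
  have : 0 <= t * a by apply: mulr_ge0; lra.
  have : 0 <= ((hi - x) / a - t) * a by apply: mulr_ge0; lra.
  by move=> *; apply/andP; split; lra.
have a_lt0 : a < 0 by rewrite lt_neqAle a_neq0 a_le0.
exists ((lo - x) / a); first by rewrite -mulrNN -invrN; apply: divr_ge0; lra.
have loE : (lo - x) / a * a = lo - x by field; rewrite lt_eqF.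
split; first by left; lra.
move=> t /andP[t_ge0 tT].
have : t * a <= 0 by apply: mulr_ge0_le0; lra.
have : ((lo - x) / a - t) * a <= 0 by apply: mulr_ge0_le0; lra.
by move=> *; apply/andP; split; lra.
Qed.

Lemma exists_level_direction (R : realFieldType) (h0 h1 c d : R) :
  (h0 != 0) || (h1 != 0) ->
  exists a b : R, [/\ (a != 0) || (b != 0), h0 * a + h1 * b = 0 & 0 <= c * a + d * b].
Proof.
move=> h_neq0; have [gt0|lt0] := leP 0 (c * h1 - d * h0).
  exists h1, (- h0); split; first by rewrite oppr_eq0 orbC.
    by ring.
  by rewrite mulrN.
exists (- h1), h0; split; first by rewrite oppr_eq0 orbC.
  by ring.
by rewrite mulrN addrC -opprB oppr_ge0 ltW.
Qed.

Section UnitInterval.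
Variable R : realType.
Local Notation I01 := (`[0, 1]%classic : set R).
Local Notation leb := (@lebesgue_measure R).
Local Notation integrable01 f := (leb.-integrable I01 (EFin \o f)).

(* Borel measurability, not membership in the generating semiring of intervals. *)
Let measurable_I01 : @measurable _ (measurableTypeR R) I01.
Proof. exact: measurable_itv. Qed.

Lemma lebesgue_measure_I01 : leb I01 = 1%:E.
Proof. by rewrite lebesgue_measure_itv /= lte01 oppr0 adde0. Qed.

Lemma Rintegral01_cst (c : R) : \int[leb]_(x in I01) c = c.
Proof.
transitivity (c * fine (leb I01)); first exact: Rintegral_cst.
by rewrite lebesgue_measure_I01 mulr1.
Qed.

Lemma integrable01_bounded (f : R -> R) (lo hi : R) : measurable_fun I01 f ->
  (forall w, I01 w -> lo <= f w <= hi) -> integrable01 f.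
Proof.
move=> mf fb; apply: measurable_bounded_integrable => //.
  by rewrite [X in (X < _)%E](_ : _ = 1%:E) ?ltry //; exact: lebesgue_measure_I01.
exists (`|lo| + `|hi|); split; first exact: num_real.
move=> M /ltW + w Iw; apply: le_trans; have /andP[lf fh] := fb w Iw.
have := ler_norm hi; have := ler_norm (- lo); rewrite normrN.
have := normr_ge0 lo; have := normr_ge0 hi => *.
by rewrite ler_norml; apply/andP; split; lra.
Qed.

Lemma integrable01_cst (c : R) : integrable01 (fun=> c).
Proof. by apply: (@integrable01_bounded _ c c) => // w _; rewrite lexx. Qed.

Lemma Rintegral01_bounded (f : R -> R) (lo hi : R) : measurable_fun I01 f ->
  (forall w, I01 w -> lo <= f w <= hi) -> lo <= \int[leb]_(x in I01) f x <= hi.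
Proof.
move=> mf fb; have intf := integrable01_bounded mf fb.
have intc := integrable01_cst.
apply/andP; split.
  rewrite -[X in X <= _]Rintegral01_cst; apply: le_Rintegral => //.
  by move=> w /fb /andP[].
rewrite -[X in _ <= X]Rintegral01_cst; apply: le_Rintegral => //.
by move=> w /fb /andP[].
Qed.

Lemma integrable01_scale (a : R) (f : R -> R) :
  integrable01 f -> integrable01 (fun x => a * f x).
Proof. by move=> /(integrableZl measurable_I01 a); apply: eq_integrable. Qed.

Lemma integrable01_add (f g : R -> R) :
  integrable01 f -> integrable01 g -> integrable01 (fun x => f x + g x).
Proof.
by move=> intf /(integrableD measurable_I01 intf); apply: eq_integrable.
Qed.

Lemma Rintegral01_affine (a b c : R) (f g : R -> R) :
  integrable01 f -> integrable01 g ->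
  \int[leb]_(x in I01) (a * f x + b * g x + c) =
  a * \int[leb]_(x in I01) f x + b * \int[leb]_(x in I01) g x + c.
Proof.
move=> intf intg; have intaf := integrable01_scale a intf.
have intbg := integrable01_scale b intg.
rewrite RintegralD ?RintegralD ?RintegralZl ?Rintegral01_cst //.
  exact: integrable01_add.
exact: integrable01_cst.
Qed.

Lemma Rintegral01_lin (a b : R) (f g : R -> R) :
  integrable01 f -> integrable01 g ->
  \int[leb]_(x in I01) (a * f x + b * g x) =
  a * \int[leb]_(x in I01) f x + b * \int[leb]_(x in I01) g x.
Proof.
move=> intf intg; rewrite -[RHS]addr0 -Rintegral01_affine //.
by apply: eq_Rintegral => x _; rewrite addr0.
Qed.

Lemma Rintegral01_indic (C : set R) : measurable C -> C `<=` I01 ->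
  \int[leb]_(x in I01) (\1_C x : R) = fine (leb C).
Proof. by move=> mC CI; rewrite /Rintegral integral_indic // setIidl. Qed.

Definition bang_bang (lo hi m : R) (f : R -> R) : Prop :=
  [/\ measurable_fun I01 f, forall w, I01 w -> f w = lo \/ f w = hi
    & \int[leb]_(x in I01) f x = m].

Lemma bang_bang_cst (lo hi c : R) (f : R -> R) : c = lo \/ c = hi ->
  (forall w, w \in I01 -> f w = c) -> bang_bang lo hi c f.
Proof.
move=> c_end fc; split.
- by apply: eq_measurable_fun (measurable_cst c) => w /fc.
- by move=> w /mem_set /fc ->.
- by rewrite -[RHS]Rintegral01_cst; apply: eq_Rintegral.
Qed.

Lemma bang_bang_indic (lo hi m : R) (C : set R) (f : R -> R) : lo < hi ->
  measurable C -> C `<=` I01 -> leb C = ((hi - m) / (hi - lo))%:E ->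
  (forall w, w \in I01 -> f w = lo * \1_C w + hi * \1_(I01 `\` C) w) ->
  bang_bang lo hi m f.
Proof.
move=> lohi mC CI lebC fC.
have fE : {in I01, f =1 fun w => (lo - hi) * \1_C w + hi}.
  move=> w Iw; rewrite fC // !indicE in_setD Iw.
  by case: (w \in C) => /=; ring.
have int_indic : integrable01 (\1_C : R -> R).
  apply: (@integrable01_bounded _ 0 1); first exact: measurable_realfun.measurable_indic.
  by move=> w _; rewrite indicE; case: (w \in C); rewrite /= ?lexx ?ler01.
split.
- apply: (eq_measurable_fun (fun w => (lo - hi) * \1_C w + hi)).
    by move=> w /fE.
  apply: measurable_realfun.measurable_funD => //.
  apply: measurable_realfun.measurable_funM => //.
- move=> w /mem_set Iw; rewrite fC // !indicE in_setD Iw.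
  by case: (w \in C) => /=; [left|right]; ring.
transitivity (\int[leb]_(x in I01) ((lo - hi) * \1_C x + hi)).
  exact: eq_Rintegral.
have int_scaled := integrable01_scale (lo - hi) int_indic.
rewrite RintegralD ?integrable01_cst // RintegralZl // Rintegral01_indic // lebC.
by rewrite Rintegral01_cst /=; field; rewrite subr_eq0 gt_eqF.
Qed.
End UnitInterval.

Lemma ray_exits_rectangle (R : realType) (mum mup sgm sgp x y a b : R) :
  inD mum mup sgm sgp x y -> (a != 0) || (b != 0) ->
  exists2 t, 0 <= t & onBoundaryD mum mup sgm sgp (x + t * a) (y + t * b).
Proof.
move=> [xD yD] ab_neq0; have [a0|a_neq0] := eqVneq a 0.
  rewrite a0 eqxx /= in ab_neq0 *.
  have [T T_ge0 [yT yin]] := ray_exits_interval yD ab_neq0.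
  exists T => //; rewrite mulr0 addr0; split.
    by split => //; apply: yin; rewrite T_ge0 lexx.
  by case: yT => ->; do 2 right; [left|right].
have [T T_ge0 [xT xin]] := ray_exits_interval xD a_neq0.
have [->|b_neq0] := eqVneq b 0.
  exists T => //; rewrite mulr0 addr0; split.
    by split => //; apply: xin; rewrite T_ge0 lexx.
  by case: xT => ->; [left|right; left].
have [S S_ge0 [yS yin]] := ray_exits_interval yD b_neq0.
have [TS|ST] := leP T S.
  exists T => //; split; first by split; [apply: xin|apply: yin]; rewrite T_ge0 ?lexx.
  by case: xT => ->; [left|right; left].
exists S => //; split; first by split; [apply: xin|apply: yin]; rewrite S_ge0 ?lexx ?ltW.
by case: yS => ->; do 2 right; [left|right].
Qed.

Section Rectangle.
Variables (R : realType) (mum mup sgm sgp h0 h1 : R).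
Hypotheses (mum_gt0 : 0 < mum) (mum_lt_mup : mum < mup).
Hypotheses (sgm_gt0 : 0 < sgm) (sgm_lt_sgp : sgm < sgp).
Let mup_gt0 : 0 < mup := lt_trans mum_gt0 mum_lt_mup.
Let sgp_gt0 : 0 < sgp := lt_trans sgm_gt0 sgm_lt_sgp.
Local Notation I01 := (`[0, 1]%classic : set R).
Local Notation leb := (@lebesgue_measure R).
Local Notation integrable01 f := (leb.-integrable I01 (EFin \o f)).
Local Notation inD := (inD mum mup sgm sgp).
Local Notation psi := (psi mum mup sgm sgp h0 h1).
Local Notation admissible := (admissible mum mup sgm sgp).

Definition psi_den (x y : R) : R :=
  (mup + mum) * x + (sgp + sgm) * y - (mum * mup + sgm * sgp).

Lemma psiE (x y : R) : psi x y = (h0 * x + h1 * y) ^+ 2 / psi_den x y.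
Proof. by rewrite /psi /psi_den /muM /sgM; congr (_ / _); field. Qed.

Lemma sqr_norm_le_psi_den (x y : R) : inD x y -> x ^+ 2 + y ^+ 2 <= psi_den x y.
Proof.
move=> [/sqr_le_secant xD /sqr_le_secant yD].
by rewrite /psi_den opprD addrACA lerD.
Qed.

Lemma psi_den_gt0 (x y : R) : inD x y -> 0 < psi_den x y.
Proof.
move=> Dxy; apply: lt_le_trans (sqr_norm_le_psi_den Dxy).
have [/andP[x_ge _] _] := Dxy.
by rewrite ltr_pwDl ?sqr_ge0 // exprn_gt0 // (lt_le_trans mum_gt0).
Qed.

Lemma admissible_integrable (mu sg : R -> R) :
  admissible mu sg -> integrable01 mu /\ integrable01 sg.
Proof.
move=> [mmu [msg muD]]; split.
  by apply: (@integrable01_bounded _ _ mum mup mmu) => w /mem_set /muD [].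
by apply: (@integrable01_bounded _ _ sgm sgp msg) => w /mem_set /muD [].
Qed.

Lemma admissible_mean_inD (mu sg : R -> R) : admissible mu sg ->
  inD (\int[leb]_(x in I01) mu x) (\int[leb]_(x in I01) sg x).
Proof.
move=> [mmu [msg muD]]; split.
  by apply: (@Rintegral01_bounded _ _ mum mup mmu) => w /mem_set /muD [].
by apply: (@Rintegral01_bounded _ _ sgm sgp msg) => w /mem_set /muD [].
Qed.

Lemma admissible_Rintegral_sqr_norm (mu sg : R -> R) : admissible mu sg ->
  let E := \int[leb]_(x in I01) (mu x ^+ 2 + sg x ^+ 2) in
  mum ^+ 2 + sgm ^+ 2 <= E /\
  E <= psi_den (\int[leb]_(x in I01) mu x) (\int[leb]_(x in I01) sg x).
Proof.
move=> adm E; have [intmu intsg] := admissible_integrable adm.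
have [mmu [msg muD]] := adm.
have msqr : measurable_fun I01 (fun x => mu x ^+ 2 + sg x ^+ 2).
  by apply: measurable_realfun.measurable_funD;
     apply: measurable_realfun.measurable_funX.
have sqr_bounds w : I01 w ->
    mum ^+ 2 + sgm ^+ 2 <= mu w ^+ 2 + sg w ^+ 2 <= mup ^+ 2 + sgp ^+ 2.
  move=> /mem_set /muD [/andP[mu_ge mu_le] /andP[sg_ge sg_le]].
  have mu_ge0 := le_trans (ltW mum_gt0) mu_ge.
  have sg_ge0 := le_trans (ltW sgm_gt0) sg_ge.
  by rewrite !lerD // lerXn2r // nnegrE ?ltW.
split.
  by have /andP[] := Rintegral01_bounded msqr sqr_bounds.
rewrite /psi_den -Rintegral01_affine //; apply: le_Rintegral => //.
- exact: integrable01_bounded msqr sqr_bounds.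
- apply: integrable01_add; last exact: integrable01_cst.
  by apply: integrable01_add; exact: integrable01_scale.
- by move=> w /mem_set /muD /sqr_norm_le_psi_den.
Qed.

Lemma J_ge_psi_mean (mu sg : R -> R) : admissible mu sg ->
  psi (\int[leb]_(x in I01) mu x) (\int[leb]_(x in I01) sg x) <= J h0 h1 mu sg.
Proof.
move=> adm; have [intmu intsg] := admissible_integrable adm.
have [sqr_ge sqr_le] := admissible_Rintegral_sqr_norm adm.
have den_gt0 : 0 < mum ^+ 2 + sgm ^+ 2 by rewrite addr_gt0 // exprn_gt0.
rewrite psiE /J Rintegral01_lin // ler_wpM2l ?sqr_ge0 // lef_pV2 ?posrE //.
  exact: lt_le_trans den_gt0 (le_trans sqr_ge sqr_le).
exact: lt_le_trans den_gt0 sqr_ge.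
Qed.

Lemma bang_bang_admissible (mu sg : R -> R) (xm ym : R) :
  bang_bang mum mup xm mu -> bang_bang sgm sgp ym sg -> admissible mu sg.
Proof.
move=> [mmu mu_end _] [msg sg_end _]; split => //; split => // w /set_mem Iw.
by split; [case: (mu_end w Iw) | case: (sg_end w Iw)] => ->;
  rewrite lexx ltW.
Qed.

Lemma J_bang_bang (mu sg : R -> R) (xm ym : R) :
  bang_bang mum mup xm mu -> bang_bang sgm sgp ym sg -> J h0 h1 mu sg = psi xm ym.
Proof.
move=> bmu bsg.
have [intmu intsg] := admissible_integrable (bang_bang_admissible bmu bsg).
have [_ mu_end mu_mean] := bmu; have [_ sg_end sg_mean] := bsg.
rewrite psiE /J Rintegral01_lin // -mu_mean -sg_mean /psi_den -Rintegral01_affine //.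
congr (_ / _); apply: eq_Rintegral => w /set_mem Iw.
rewrite (sqr_secant_endpoint (mu_end w Iw)) (sqr_secant_endpoint (sg_end w Iw)).
by ring.
Qed.

Lemma bang_bang_minimizes (xs ys : R) (mus sgs : R -> R) :
  psi_minimizer mum mup sgm sgp h0 h1 xs ys ->
  bang_bang mum mup xs mus -> bang_bang sgm sgp ys sgs ->
  admissible mus sgs /\
  forall mu sg, admissible mu sg -> J h0 h1 mus sgs <= J h0 h1 mu sg.
Proof.
move=> [_ psi_min] bmu bsg; split; first exact: bang_bang_admissible bmu bsg.
move=> mu sg adm; rewrite (J_bang_bang bmu bsg).
exact: le_trans (psi_min _ _ (admissible_mean_inD adm)) (J_ge_psi_mean adm).
Qed.

Lemma star_pair_bang_bang (xs ys : R) (A B : set R) (mus sgs : R -> R) :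
  measurable A -> measurable B -> A `<=` I01 -> B `<=` I01 ->
  leb A = ((mup - xs) / (mup - mum))%:E -> leb B = ((sgp - ys) / (sgp - sgm))%:E ->
  star_pair mum mup sgm sgp xs ys A B mus sgs ->
  bang_bang mum mup xs mus /\ bang_bang sgm sgp ys sgs.
Proof.
move=> mA mB AI BI lebA lebB.
have indicA := bang_bang_indic mum_lt_mup mA AI lebA.
have indicB := bang_bang_indic sgm_lt_sgp mB BI lebB.
case=> [[-> star]|[[-> star]|[[-> star]|[-> star]]]].
- split; first by apply: bang_bang_cst; [left | move=> w /star []].
  by apply: indicB => w /star [].
- split; first by apply: bang_bang_cst; [right | move=> w /star []].
  by apply: indicB => w /star [].
- split; last by apply: bang_bang_cst; [left | move=> w /star []].
  by apply: indicA => w /star [].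
- split; last by apply: bang_bang_cst; [right | move=> w /star []].
  by apply: indicA => w /star [].
Qed.

Lemma psi_continuous :
  {within [set q : R * R | inD q.1 q.2], continuous (fun q => psi q.1 q.2)}.
Proof.
apply: continuous_in_subspaceT => q /set_mem Dq.
have lin (a b : R) : (a * r.1 + b * r.2) @[r --> q] --> a * q.1 + b * q.2.
  by apply: cvgD; apply: cvgM; (exact: cvg_cst || exact: cvg_fst || exact: cvg_snd).
have -> : (fun r => psi r.1 r.2) =
    fun r => (h0 * r.1 + h1 * r.2) ^+ 2 / psi_den r.1 r.2.
  by apply/funext => r; rewrite psiE.
apply: cvgM; first by rewrite expr2; apply: cvgM; exact: lin.
apply: cvgV; first by rewrite gt_eqF // psi_den_gt0.
by apply: cvgB; [exact: lin | exact: cvg_cst].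
Qed.

Lemma psi_le_along_level_direction (x y a b t : R) :
  inD x y -> inD (x + t * a) (y + t * b) -> 0 <= t ->
  h0 * a + h1 * b = 0 -> 0 <= (mup + mum) * a + (sgp + sgm) * b ->
  psi (x + t * a) (y + t * b) <= psi x y.
Proof.
move=> Dxy Dt t_ge0 level ascent; rewrite !psiE.
have -> : h0 * (x + t * a) + h1 * (y + t * b) = h0 * x + h1 * y.
  by rewrite -[RHS]addr0 -(mulr0 t) -level; ring.
rewrite ler_wpM2l ?sqr_ge0 // lef_pV2 ?posrE ?psi_den_gt0 //.
rewrite -subr_ge0 (_ : _ - _ = t * ((mup + mum) * a + (sgp + sgm) * b)).
  exact: mulr_ge0.
by rewrite /psi_den; ring.
Qed.

Lemma exists_psi_minimizer : exists2 q : R * R, inD q.1 q.2 &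
  forall x y, inD x y -> psi q.1 q.2 <= psi x y.
Proof.
have D_neq0 : [set q : R * R | inD q.1 q.2] !=set0.
  by exists (mum, sgm); split; rewrite /= lexx ltW.
have D_compact : compact [set q : R * R | inD q.1 q.2].
  have -> : [set q : R * R | inD q.1 q.2] = `[mum, mup] `*` `[sgm, sgp].
    by apply/seteqP; split => q; rewrite /= !in_itv.
  by apply: compact_setX; exact: segment_compact.
have [q /set_mem Dq q_min] := compact_EVT_min D_neq0 D_compact psi_continuous.
by exists q => // x y Dxy; exact: (q_min (x, y) (mem_set Dxy)).
Qed.

Lemma exists_boundary_psi_minimizer :
  (forall x y, inD x y -> 0 < h0 * x + h1 * y) ->
  exists xs ys, onBoundaryD mum mup sgm sgp xs ys /\
                psi_minimizer mum mup sgm sgp h0 h1 xs ys.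
Proof.
move=> h_pos; have [[x y] /= Dxy xy_min] := exists_psi_minimizer.
have h_neq0 : (h0 != 0) || (h1 != 0).
  apply: contraPT (h_pos x y Dxy); rewrite negb_or => /andP[/negPn/eqP-> /negPn/eqP->].
  by rewrite !mul0r addr0 ltxx.
have [a [b [ab_neq0 level ascent]]] :=
  exists_level_direction (mup + mum) (sgp + sgm) h_neq0.
have [t t_ge0 [Dt Bt]] := ray_exits_rectangle Dxy ab_neq0.
exists (x + t * a), (y + t * b); split => //; split => // x' y' D'.
exact: le_trans (psi_le_along_level_direction Dxy Dt t_ge0 level ascent) (xy_min _ _ D').
Qed.
End Rectangle.

Theorem mainTheorem7 (R : realType) (mum mup sgm sgp h0 h1 : R) :
  0 < mum -> mum < mup -> 0 < sgm -> sgm < sgp ->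
  (forall x y, inD mum mup sgm sgp x y -> 0 < h0 * x + h1 * y) ->
  (exists xs ys, onBoundaryD mum mup sgm sgp xs ys /\
                 psi_minimizer mum mup sgm sgp h0 h1 xs ys) /\
  (forall xs ys, onBoundaryD mum mup sgm sgp xs ys ->
     psi_minimizer mum mup sgm sgp h0 h1 xs ys ->
   forall A B : set R, measurable A -> measurable B ->
     A `<=` (`[0, 1] : set R) -> B `<=` (`[0, 1] : set R) ->
     (@lebesgue_measure R) A = ((mup - xs) / (mup - mum))%:E ->
     (@lebesgue_measure R) B = ((sgp - ys) / (sgp - sgm))%:E ->
   forall mus sgs : R -> R,
     star_pair mum mup sgm sgp xs ys A B mus sgs ->
     admissible mum mup sgm sgp mus sgs /\
     forall mu sg : R -> R, admissible mum mup sgm sgp mu sg ->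
       J h0 h1 mus sgs <= J h0 h1 mu sg).
Proof.
move=> mum_gt0 mum_lt_mup sgm_gt0 sgm_lt_sgp h_pos.
split; first exact: exists_boundary_psi_minimizer.
move=> xs ys _ xy_min A B mA mB AI BI lebA lebB mus sgs star.
have [bmu bsg] := star_pair_bang_bang mum_lt_mup sgm_lt_sgp mA mB AI BI lebA lebB star.
exact: (bang_bang_minimizes mum_gt0 mum_lt_mup sgm_gt0 sgm_lt_sgp xy_min bmu bsg).
Qed.
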